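(* Let $k\ge1$. Then for all graphs $G,G'$, all $\vec v\in V(G)^{k+1}$, $\vec v'\in V(G')^{k+1}$, and all $t\in\mathbb{N}$, the following are equivalent: (i) $\mathrm{OWL}^{k+1,t}(G,\vec v)=\mathrm{OWL}^{k+1,t}(G',\vec v')$; (ii) $\mathrm{atp}_{k+1}(G,\vec v)=\mathrm{atp}_{k+1}(G',\vec v')$ and $\mathrm{WL}^{k,t}(G,\vec v[/i])=\mathrm{WL}^{k,t}(G',\vec v'[/i])$ for all $i\in[k+1]$.
   Context: Graphs are finite, undirected, simple, with a fixed number $\ell$ of vertex labels $P_1(G),\dots,P_\ell(G)\subseteq V(G)$. Colours are formal objects (nested tuples/multisets) comparable across graphs. For $\vec v=(v_1,\dots,v_m)\in V(G)^m$: $\mathrm{atp}_m(G,\vec v)$ is the 0/1-vector recording, for $1\le i<j\le m$, whether $v_i=v_j$ and whether $v_iv_j\in E(G)$, and for $i\in[m],j\in[\ell]$ whether $v_i\in P_j(G)$. $\vec vw=(v_1,\dots,v_m,w)$; $\vec v[w/i]=(v_1,\dots,v_{i-1},w,v_{i+1},\dots,v_m)$; $\vec v[/i]=(v_1,\dots,v_{i-1},v_{i+1},\dots,v_m)$. $k$-WL: $\mathrm{WL}^{k,0}=\mathrm{atp}_k$, $\mathrm{WL}^{k,t+1}(G,\vec v)=\big(\mathrm{WL}^{k,t}(G,\vec v),\{\!\{(\mathrm{atp}_{k+1}(G,\vec vw),\mathrm{WL}^{k,t}(G,\vec v[w/1]),\dots,\mathrm{WL}^{k,t}(G,\vec v[w/k])):w\in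 V(G)\}\!\}\big)$ for $\vec v\in V(G)^k$. Oblivious $m$-WL: $\mathrm{OWL}^{m,0}=\mathrm{atp}_m$, $\mathrm{OWL}^{m,t+1}(G,\vec v)=\big(\mathrm{OWL}^{m,t}(G,\vec v),M_1,\dots,M_m\big)$ with $M_i=\{\!\{\mathrm{OWL}^{m,t}(G,\vec v[w/i]):w\in V(G)\}\!\}$ for $\vec v\in V(G)^m$. *)

From mathcomp Require Import all_boot.
Set Implicit Arguments. Unset Strict Implicit. Unset Printing Implicit Defensive.

Record graph (l : nat) := Graph {
  gV :> finType;
  gE : rel gV;
  gE_sym : symmetric gE;
  gE_irr : irreflexive gE;
  gP : 'I_l -> {set gV} }.

(* Colours: formal trees over atomic-type vectors; comparable across graphs. *)
Definition colour := GenTree.tree (seq bool).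

(* Canonical representative of a multiset of colours: sorted by pickle code. *)
Definition mset (s : seq colour) : seq colour :=
  sort (fun x y : colour => pickle x <= pickle y) s.

Section Ops.
Variables (l : nat) (G : graph l).

(* atp_m(G, v), m = size v : equality and adjacency bits for pairs i<j,
   then label bits v_i \in P_j. *)
Definition atp (v : seq G) : seq bool :=
  let vs := zip v (iota 0 (size v)) in
  flatten [seq [:: p.1 == q.1; @gE l G p.1 q.1]
          | p <- vs, q <- [seq q <- vs | p.2 < q.2]]
  ++ [seq x \in @gP l G j | x <- v, j <- enum 'I_l].

(* v[w/i] (0-based index i) *)
Definition repl (v : seq G) (i : nat) (w : G) : seq G := set_nth w v i w.
(* v[/i] (0-based index i) *)
Definition del (v : seq G) (i : nat) : seq G := take i v ++ drop i.+1 v.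

(* k-WL colour, with k = size v *)
Fixpoint WL (t : nat) (v : seq G) : colour :=
  match t with
  | 0 => GenTree.Leaf (atp v)
  | t'.+1 =>
    GenTree.Node 0 [:: WL t' v;
      GenTree.Node 1 (mset
        [seq GenTree.Node 2 (GenTree.Leaf (atp (rcons v w))
               :: [seq WL t' (repl v i w) | i <- iota 0 (size v)])
        | w <- enum G])]
  end.

(* oblivious m-WL colour, with m = size v *)
Fixpoint OWL (t : nat) (v : seq G) : colour :=
  match t with
  | 0 => GenTree.Leaf (atp v)
  | t'.+1 =>
    GenTree.Node 0 (OWL t' v ::
      [seq GenTree.Node 1 (mset [seq OWL t' (repl v i w) | w <- enum G])
      | i <- iota 0 (size v)])
  end.
End Ops.

(* The OWL^{t+1} colour of v is its OWL^t colour together with,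
   for each i, the multiset over w of the OWL^t colours of v[w/i]; by induction,
   each of these is equivalent to atp(v[w/i]) and the WL^t colours of all
   v[w/i][/j].  The WL^{t+1} colour of v[/i] is its WL^t colour together with
   the multiset over w of atp(v[/i] w) and the WL^t colours of all v[/i][w/j].
   Both descriptions speak about the same tuples up to reordering: v[w/i] is a
   permutation of v[/i] w, v[w/i][/i] = v[/i], and v[w/i][/j] for j <> i is a
   permutation of v[/i][w/j'].  Reordering is harmless because the atomic type
   and the k-WL colour of a tuple determine those of each of its injective
   reindexings, which is proved by a separate induction on t. *)

From mathcomp Require Import all_boot zify.
Set Implicit Arguments. Unset Strict Implicit. Unset Printing Implicit Defensive.

Definition nths (T : Type) (x0 : T) (s : seq T) (p : seq nat) := [seq nth x0 s i | i <- p].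

Definition del_nth (T : Type) (s : seq T) (i : nat) := take i s ++ drop i.+1 s.

Section DelNth.
Variable T : Type.

Lemma size_del_nth (s : seq T) i : i < size s -> size (del_nth s i) = (size s).-1.
Proof. by move=> lt_i; rewrite size_cat size_take size_drop lt_i; lia. Qed.

Lemma nth_del_nth (x0 : T) s i j : i < size s -> nth x0 (del_nth s i) j = nth x0 s (bump i j).
Proof.
move=> lt_i; rewrite nth_cat size_take lt_i /bump.
case: ltnP => [lt_ji|le_ij]; first by rewrite nth_take.
by rewrite nth_drop; congr nth; lia.
Qed.

Lemma cat_take_nth_drop (x0 : T) s i :
  i < size s -> take i s ++ nth x0 s i :: drop i.+1 s = s.
Proof. by move=> lt_i; rewrite -drop_nth // cat_take_drop. Qed.

End DelNth.

Lemma perm_set_nth_del_nth (T : eqType) (x0 : T) s i y :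
  i < size s -> perm_eq (set_nth x0 s i y) (y :: del_nth s i).
Proof. by move=> lt_i; rewrite set_nthE lt_i perm_catC /= perm_cons perm_catC. Qed.

Lemma mem_del_nth (T : eqType) (x0 : T) s i x : uniq s -> i < size s ->
  (x \in del_nth s i) = (x \in s) && (x != nth x0 s i).
Proof.
move=> + lt_i; rewrite -{1 3}(cat_take_nth_drop x0 lt_i) cat_uniq /= !mem_cat inE.
case/and3P=> _ /norP[nt _] /andP[nd _].
by case: eqP => [->|]; rewrite ?(negbTE nd) ?(negbTE nt) ?andbT.
Qed.

Lemma del_nth_subseq (T : eqType) (s : seq T) i : subseq (del_nth s i) s.
Proof.
by rewrite -{2}(cat_take_drop i s) cat_subseq // -add1n -drop_drop drop_subseq.
Qed.

Lemma del_nth_uniq (T : eqType) (s : seq T) i : uniq s -> uniq (del_nth s i).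
Proof. exact/subseq_uniq/del_nth_subseq. Qed.

Section Nths.
Variables (T : Type) (x0 : T).

Lemma nths_iota (s : seq T) : nths x0 s (iota 0 (size s)) = s.
Proof. exact: mkseq_nth. Qed.

Lemma nths_rcons_iota (s : seq T) y : nths x0 (rcons s y) (iota 0 (size s)) = s.
Proof.
rewrite -[RHS](nths_iota s); apply/eq_in_map => i.
by rewrite mem_iota nth_rcons => /= ->.
Qed.

Lemma nths_rcons (s : seq T) p d : nths x0 s (rcons p d) = rcons (nths x0 s p) (nth x0 s d).
Proof. exact: map_rcons. Qed.

Lemma nths_rcons_in (s : seq T) p y : all (fun a => a < size s) p ->
  nths x0 (rcons s y) (rcons p (size s)) = rcons (nths x0 s p) y.
Proof.
move=> /allP ps; rewrite nths_rcons nth_rcons ltnn eqxx; congr rcons.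
by apply/eq_in_map => a /ps lt_a; rewrite nth_rcons lt_a.
Qed.

Lemma nths_del_nth (s : seq T) p j : nths x0 s (del_nth p j) = del_nth (nths x0 s p) j.
Proof. by rewrite /nths map_cat map_take map_drop. Qed.

Lemma nths_set_nth (s : seq T) p j d e :
  nths x0 s (set_nth d p j e) = set_nth (nth x0 s d) (nths x0 s p) j (nth x0 s e).
Proof.
elim: p j => [|a p IH] [|j] //=; last by rewrite IH.
by elim: j => //= j ->.
Qed.

Lemma nths_index (s : seq T) (D Q : seq nat) : {subset Q <= D} ->
  nths x0 (nths x0 s D) [seq index i D | i <- Q] = nths x0 s Q.
Proof.
move=> sQD; rewrite /nths -map_comp; apply/eq_in_map => i /sQD iD /=.
by rewrite (nth_map 0) ?index_mem // nth_index.
Qed.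

Lemma nth_set_nth_in (s : seq T) a b y w : a < size s -> b < size s ->
  nth x0 (set_nth y s a w) b = if b == a then w else nth x0 s b.
Proof.
move=> lt_a lt_b.
rewrite (set_nth_default y) ?size_set_nth ?leq_max ?lt_b ?orbT // nth_set_nth /=.
by case: eqP => // _; apply: set_nth_default.
Qed.

Lemma set_nth_nths (s : seq T) p i y w :
  uniq p -> all (fun a => a < size s) p -> i < size p ->
  set_nth y (nths x0 s p) i w = nths x0 (set_nth y s (nth 0 p i) w) p.
Proof.
move=> up /allP ps lt_i; have lt_pi : nth 0 p i < size s by apply/ps/mem_nth.
apply: (@eq_from_nth _ x0); first by rewrite size_set_nth !size_map; apply/maxn_idPr.
move=> r; rewrite size_set_nth size_map (maxn_idPr lt_i) => lt_r.
have lt_pr : nth 0 p r < size s by apply/ps/mem_nth.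
rewrite nth_set_nth_in ?size_map // !(nth_map 0) // nth_set_nth_in //.
by rewrite (nth_uniq 0 lt_r lt_i up).
Qed.

End Nths.

Lemma mset_eq_perm (s1 s2 : seq colour) : mset s1 = mset s2 <-> perm_eq s1 s2.
Proof.
have leT_total : total (fun x y : colour => pickle x <= pickle y).
  by move=> x y; apply: leq_total.
have leT_trans : transitive (fun x y : colour => pickle x <= pickle y).
  by move=> x y z; apply: leq_trans.
have leT_anti : antisymmetric (fun x y : colour => pickle x <= pickle y).
  by move=> x y /anti_leq /(pcan_inj pickleK_inv).
by split=> /(perm_sortP leT_total leT_trans leT_anti).
Qed.

Lemma perm_map_transfer (A B C D : eqType) (F : A -> C) (F' : B -> C)
    (H : A -> D) (H' : B -> D) s s' :
  (forall x y, x \in s -> y \in s' -> F x = F' y -> H x = H' y) ->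
  perm_eq (map F s) (map F' s') -> perm_eq (map H s) (map H' s').
Proof.
elim: s s' => [|x s IH] s'; first by move=> _ /perm_size; case: s'.
move=> FH eqFs; have: F x \in map F' s' by rewrite -(perm_mem eqFs) mem_head.
case/mapP=> y s'y Fxy.
apply: (@perm_trans _ (H' y :: map H' (rem y s'))); last first.
  by rewrite perm_sym -map_cons perm_map // perm_to_rem.
rewrite /= (FH x y) ?mem_head // perm_cons; apply: IH => [a b sa s'b|].
  by apply: FH; rewrite ?inE ?sa ?orbT // (mem_rem s'b).
by rewrite -(perm_cons (F x)) (perm_trans eqFs) // Fxy -map_cons perm_map // perm_to_rem.
Qed.

Lemma mset_map_transfer (A B : eqType) (F : A -> colour) (F' : B -> colour)
    (H : A -> colour) (H' : B -> colour) s s' :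
  (forall x y, x \in s -> y \in s' -> F x = F' y -> H x = H' y) ->
  mset (map F s) = mset (map F' s') -> mset (map H s) = mset (map H' s').
Proof. by move=> FH /mset_eq_perm eqF; apply/mset_eq_perm/(perm_map_transfer FH). Qed.

Lemma flatten_pairs_eq (A : eqType) (a b a' b' : A -> bool) (L : seq A) :
  flatten [seq [:: a z; b z] | z <- L] = flatten [seq [:: a' z; b' z] | z <- L] ->
  forall z, z \in L -> a z = a' z /\ b z = b' z.
Proof.
elim: L => //= z0 L IH [eq_a eq_b /IH eqL] z.
by rewrite inE => /predU1P[->|/eqL].
Qed.

Lemma size_flatten_pairs (A : Type) (a b : A -> bool) (L : seq A) :
  size (flatten [seq [:: a z; b z] | z <- L]) = (size L).*2.
Proof. by elim: L => //= z L ->; rewrite doubleS. Qed.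

Lemma allpairs_pairE (S T R : Type) (f : S -> T -> R) s (t : S -> seq T) :
  [seq f x y | x <- s, y <- t x] = [seq f z.1 z.2 | z <- [seq (x, y) | x <- s, y <- t x]].
Proof. by rewrite map_allpairs. Qed.

Lemma atpE (l : nat) (G : graph l) (x0 : G) (u : seq G) : atp u =
  flatten [seq [:: nth x0 u i == nth x0 u j; gE (nth x0 u i) (nth x0 u j)]
          | i <- iota 0 (size u), j <- [seq j <- iota 0 (size u) | i < j]]
  ++ [seq nth x0 u i \in gP G c | i <- iota 0 (size u), c <- enum 'I_l].
Proof.
rewrite /atp; congr (_ ++ _); last by rewrite -{1}(nths_iota x0 u) allpairs_mapl.
have -> : zip u (iota 0 (size u)) = [seq (nth x0 u i, i) | i <- iota 0 (size u)].
  by rewrite -zip_map map_id; congr zip; rewrite [RHS]nths_iota.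
rewrite allpairs_mapl (eq_allpairsr _ _ (fun i => filter_map _ _ _)).
by rewrite allpairs_mapr.
Qed.

Section Atp.
Variables (l : nat) (G G' : graph l).

Definition atp_agree (u : seq G) (u' : seq G') (x0 : G) (x0' : G') :=
  forall a b, a < size u -> b < size u ->
  [/\ (nth x0 u a == nth x0 u b) = (nth x0' u' a == nth x0' u' b),
      gE (nth x0 u a) (nth x0 u b) = gE (nth x0' u' a) (nth x0' u' b)
    & forall c, (nth x0 u a \in gP G c) = (nth x0' u' a \in gP G' c)].

Lemma atp_eq_agree (u : seq G) (u' : seq G') x0 x0' :
  size u' = size u -> atp u = atp u' <-> atp_agree u u' x0 x0'.
Proof.
move=> eq_size; rewrite (atpE x0) (atpE x0') eq_size.
rewrite [X in flatten X ++ _ = _]allpairs_pairE [X in _ = flatten X ++ _]allpairs_pairE.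
set pairs := [seq (i, j) | i <- _, j <- _].
have pairsP a b : a < size u -> b < size u -> a < b -> (a, b) \in pairs.
  move=> lt_a lt_b lt_ab; apply/allpairsPdep; exists a, b.
  by rewrite mem_filter !mem_iota lt_ab lt_a lt_b.
split=> [|agree].
  move/eqP; rewrite eqseq_cat ?size_flatten_pairs //.
  case/andP=> /eqP /flatten_pairs_eq eq_pairs /eqP /eq_in_allpairs_dep eq_lab a b lt_a lt_b.
  split; last by move=> c; apply: eq_lab; rewrite ?mem_iota ?mem_enum.
  - case: (ltngtP a b) => [lt_ab|lt_ba|<-]; last by rewrite !eqxx.
    + by case: (eq_pairs _ (pairsP _ _ lt_a lt_b lt_ab)).
    + by case: (eq_pairs _ (pairsP _ _ lt_b lt_a lt_ba)) => /= E _; rewrite eq_sym E eq_sym.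
  - case: (ltngtP a b) => [lt_ab|lt_ba|<-]; last by rewrite !gE_irr.
    + by case: (eq_pairs _ (pairsP _ _ lt_a lt_b lt_ab)).
    + by case: (eq_pairs _ (pairsP _ _ lt_b lt_a lt_ba)) => /= _ E; rewrite gE_sym E gE_sym.
congr (flatten _ ++ _).
  apply/eq_in_map => _ /allpairsPdep[a [b [+ + ->]]].
  rewrite mem_filter !mem_iota /= => lt_a /andP[_ lt_b].
  by case: (agree a b lt_a lt_b) => -> -> _.
apply/eq_in_allpairs_dep => a; rewrite mem_iota /= => lt_a c _.
by case: (agree a a lt_a lt_a) => _ _ ->.
Qed.

Lemma atp_nths (u : seq G) (u' : seq G') x0 x0' p :
  size u' = size u -> all (fun a => a < size u) p -> atp u = atp u' ->
  atp (nths x0 u p) = atp (nths x0' u' p).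
Proof.
move=> eq_size /allP pu /(atp_eq_agree x0 x0' eq_size) agree.
apply/(atp_eq_agree x0 x0'); first by rewrite !size_map.
move=> a b; rewrite size_map => lt_a lt_b; rewrite !(nth_map 0) //.
by apply: agree; apply/pu/mem_nth.
Qed.

Lemma atp_nths_sub (X : seq G) (X' : seq G') x0 x0' (D Q : seq nat) :
  {subset Q <= D} -> atp (nths x0 X D) = atp (nths x0' X' D) ->
  atp (nths x0 X Q) = atp (nths x0' X' Q).
Proof.
move=> sQD eqD; rewrite -(nths_index x0 X sQD) -(nths_index x0' X' sQD).
apply: atp_nths eqD; first by rewrite !size_map.
by apply/allP => _ /mapP[i Qi ->]; rewrite size_map index_mem sQD.
Qed.

End Atp.

Section Refinement.
Variables (l : nat) (G G' : graph l).

Definition WL_entry (H : graph l) t (u : seq H) (w : H) : colour :=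
  GenTree.Node 2 (GenTree.Leaf (atp (rcons u w))
                  :: [seq WL t (repl u i w) | i <- iota 0 (size u)]).

Lemma WL_succ_eq t (u : seq G) (u' : seq G') :
  WL t.+1 u = WL t.+1 u' <->
  WL t u = WL t u' /\
  mset [seq WL_entry t u w | w <- enum G] = mset [seq WL_entry t u' w | w <- enum G'].
Proof. by split=> [[-> ->] | [/= -> ->]]. Qed.

Lemma WL_entry_eq t (u : seq G) (u' : seq G') w w' : size u' = size u ->
  WL_entry t u w = WL_entry t u' w' <->
  atp (rcons u w) = atp (rcons u' w') /\
  forall i, i < size u -> WL t (repl u i w) = WL t (repl u' i w').
Proof.
move=> eq_size; rewrite /WL_entry eq_size; split=> [[-> eq_repl] | [-> eq_repl]].
  by split=> // i lt_i; move/eq_in_map: eq_repl; apply; rewrite mem_iota.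
by congr (GenTree.Node 2 (_ :: _)); apply/eq_in_map => i; rewrite mem_iota; apply: eq_repl.
Qed.

Lemma OWL_succ_eq t (v : seq G) (v' : seq G') : size v' = size v ->
  OWL t.+1 v = OWL t.+1 v' <->
  OWL t v = OWL t v' /\
  forall i, i < size v -> mset [seq OWL t (repl v i w) | w <- enum G] =
                          mset [seq OWL t (repl v' i w) | w <- enum G'].
Proof.
move=> eq_size; rewrite /= eq_size; split=> [[-> eq_m] | [-> eq_m]].
  by split=> // i lt_i; move/eq_in_map: eq_m => /(_ i); rewrite mem_iota => /(_ lt_i) [].
by congr (GenTree.Node 0 (_ :: _)); apply/eq_in_map => i; rewrite mem_iota => /eq_m ->.
Qed.

Lemma WL_nths t (u : seq G) (u' : seq G') x0 x0' p :
  size u' = size u -> uniq p -> all (fun a => a < size u) p ->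
  WL t u = WL t u' -> WL t (nths x0 u p) = WL t (nths x0' u' p).
Proof.
elim: t u u' p => [|t IH] u u' p eq_size up pu.
  by case=> eq_atp; congr GenTree.Leaf; apply: atp_nths.
have pu' : all (fun a => a < size u') p by rewrite eq_size.
case/WL_succ_eq=> /(IH _ _ _ eq_size up pu) eq_WL eq_entries; apply/WL_succ_eq.
split=> //; apply: mset_map_transfer eq_entries => w w' _ _.
case/(WL_entry_eq _ _ _ eq_size)=> eq_atp eq_repl.
apply/WL_entry_eq; first by rewrite !size_map.
split=> [|i].
  rewrite -!nths_rcons_in // eq_size; apply: atp_nths; rewrite ?size_rcons ?eq_size //.
  by rewrite all_rcons ltnSn; apply: sub_all pu => a /ltnW.
rewrite size_map => lt_i; have lt_pi : nth 0 p i < size u by apply/(allP pu)/mem_nth.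
rewrite /repl !set_nth_nths //; apply: IH => //; last exact: eq_repl.
  by rewrite !size_set_nth eq_size.
by rewrite size_set_nth (maxn_idPr lt_pi).
Qed.

Lemma WL_nths_sub t (X : seq G) (X' : seq G') x0 x0' (D Q : seq nat) :
  uniq Q -> {subset Q <= D} -> WL t (nths x0 X D) = WL t (nths x0' X' D) ->
  WL t (nths x0 X Q) = WL t (nths x0' X' Q).
Proof.
move=> uQ sQD eqD; rewrite -(nths_index x0 X sQD) -(nths_index x0' X' sQD).
apply: WL_nths eqD; first by rewrite !size_map.
  by rewrite map_inj_in_uniq // => a b /sQD Da /sQD Db /(congr1 (nth 0 D)); rewrite !nth_index.
by apply/allP => _ /mapP[i Qi ->]; rewrite size_map index_mem sQD.
Qed.

End Refinement.

(* Index lists into the tuple [rcons v w] with [n = size v], so that position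
   [n] holds [w]: [del_nth (iota 0 n) i] indexes v[/i] and
   [set_nth n (iota 0 n) i n] indexes v[w/i]. *)
Section IndexLists.
Variables (n i : nat).

Lemma del_iota_bounded : all (fun a => a < n) (del_nth (iota 0 n) i).
Proof. by apply/allP => a /(mem_subseq (del_nth_subseq _ _)); rewrite mem_iota. Qed.

Hypothesis lt_i : i < n.

Lemma mem_del_iota x : (x \in del_nth (iota 0 n) i) = (x < n) && (x != i).
Proof. by rewrite (mem_del_nth 0) ?iota_uniq ?size_iota // mem_iota nth_iota. Qed.

Lemma perm_repl_iota : perm_eq (set_nth n (iota 0 n) i n) (n :: del_nth (iota 0 n) i).
Proof. by rewrite perm_set_nth_del_nth ?size_iota. Qed.

Lemma mem_repl_iota x :
  (x \in set_nth n (iota 0 n) i n) = (x == n) || (x < n) && (x != i).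
Proof. by rewrite (perm_mem perm_repl_iota) inE mem_del_iota. Qed.

Lemma repl_iota_uniq : uniq (set_nth n (iota 0 n) i n).
Proof.
by rewrite (perm_uniq perm_repl_iota) /= mem_del_iota ltnn del_nth_uniq ?iota_uniq.
Qed.

Lemma mem_del_repl_iota j x : j < n ->
  (x \in del_nth (set_nth n (iota 0 n) i n) j) =
  ((x == n) || (x < n) && (x != i)) && (x != if j == i then n else j).
Proof.
move=> lt_j; rewrite (mem_del_nth n) ?repl_iota_uniq //; last first.
  by rewrite size_set_nth size_iota (maxn_idPr lt_i).
by rewrite mem_repl_iota nth_set_nth /= nth_iota.
Qed.

Lemma del_repl_iota_uniq j : uniq (del_nth (set_nth n (iota 0 n) i n) j).
Proof. exact/del_nth_uniq/repl_iota_uniq. Qed.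

Lemma perm_repl_del_iota j : j < n.-1 ->
  perm_eq (set_nth n (del_nth (iota 0 n) i) j n) (n :: del_nth (del_nth (iota 0 n) i) j).
Proof. by move=> lt_j; rewrite perm_set_nth_del_nth ?size_del_nth ?size_iota. Qed.

Lemma mem_repl_del_iota j x : j < n.-1 ->
  (x \in set_nth n (del_nth (iota 0 n) i) j n) =
  (x == n) || [&& x < n, x != i & x != bump i j].
Proof.
move=> lt_j; rewrite (perm_mem (perm_repl_del_iota lt_j)) inE.
rewrite (mem_del_nth 0) ?del_nth_uniq ?iota_uniq ?size_del_nth ?size_iota //.
by rewrite mem_del_iota nth_del_nth ?size_iota // nth_iota ?andbA //; rewrite /bump; lia.
Qed.

Lemma repl_del_iota_uniq j : j < n.-1 -> uniq (set_nth n (del_nth (iota 0 n) i) j n).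
Proof.
move=> lt_j; rewrite (perm_uniq (perm_repl_del_iota lt_j)) /=.
rewrite !del_nth_uniq ?iota_uniq ?andbT //.
apply: contraFN (ltnn n) => /(mem_subseq (del_nth_subseq _ _)).
by rewrite mem_del_iota => /andP[].
Qed.

End IndexLists.

Section Positions.
Variables (l : nat) (H : graph l) (v : seq H) (w : H).

Lemma delE i : del v i = del_nth v i.
Proof. by []. Qed.

Lemma size_repl i : i < size v -> size (repl v i w) = size v.
Proof. by move=> lt_i; rewrite size_set_nth; apply/maxn_idPr. Qed.

Let X := rcons v w.
Let n := size v.

Lemma nth_rcons_size : nth w X n = w.
Proof. by rewrite nth_rcons ltnn eqxx. Qed.

Lemma del_nths i : del v i = nths w X (del_nth (iota 0 n) i).
Proof. by rewrite nths_del_nth nths_rcons_iota. Qed.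

Lemma repl_nths i : repl v i w = nths w X (set_nth n (iota 0 n) i n).
Proof. by rewrite nths_set_nth nths_rcons_iota nth_rcons_size. Qed.

Lemma rcons_del_nths i :
  rcons (del v i) w = nths w X (rcons (del_nth (iota 0 n) i) n).
Proof. by rewrite nths_rcons -del_nths nth_rcons_size. Qed.

Lemma repl_del_nths i j :
  repl (del v i) j w = nths w X (set_nth n (del_nth (iota 0 n) i) j n).
Proof. by rewrite nths_set_nth -del_nths nth_rcons_size. Qed.

Lemma del_repl_nths i j :
  del (repl v i w) j = nths w X (del_nth (set_nth n (iota 0 n) i n) j).
Proof. by rewrite nths_del_nth -repl_nths. Qed.

End Positions.

Section ObliviousWL.
Variables (l : nat) (G G' : graph l).

Lemma atp_del (u : seq G) (u' : seq G') i :
  size u' = size u -> atp u = atp u' -> atp (del u i) = atp (del u' i).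
Proof.
case: u => [|x0 u]; case: u' => [|x0' u'] // eq_size eq_atp.
rewrite !delE -(nths_iota x0 (x0 :: u)) -(nths_iota x0' (x0' :: u')) eq_size.
by rewrite -!nths_del_nth; apply: atp_nths; rewrite ?eq_size ?del_iota_bounded.
Qed.

Lemma WL_del_repl_eq t (v : seq G) (v' : seq G') w w' i :
  size v' = size v -> i < size v -> WL t (del v i) = WL t (del v' i) ->
  (atp (repl v i w) = atp (repl v' i w') /\
   forall j, j < size v -> WL t (del (repl v i w) j) = WL t (del (repl v' i w') j))
  <-> WL_entry t (del v i) w = WL_entry t (del v' i) w'.
Proof.
move=> eq_size lt_i eq_del.
have size_del : size (del v i) = (size v).-1 by rewrite delE size_del_nth.
rewrite WL_entry_eq; last by rewrite !delE !size_del_nth ?eq_size.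
rewrite size_del.
have eq_atp_perm : atp (repl v i w) = atp (repl v' i w') <->
                  atp (rcons (del v i) w) = atp (rcons (del v' i) w').
  rewrite !repl_nths !rcons_del_nths eq_size.
  by split; apply: atp_nths_sub => x; rewrite mem_rcons inE mem_del_iota // mem_repl_iota.
rewrite eq_atp_perm; split=> [[eq_atp eq_dr] | [eq_atp eq_rd]]; split=> // j lt_j.
  have lt_bj : bump i j < size v by rewrite /bump; lia.
  move: (eq_dr _ lt_bj); rewrite !del_repl_nths !repl_del_nths eq_size.
  apply: WL_nths_sub; first exact: repl_del_iota_uniq.
  by move=> x; rewrite mem_repl_del_iota // mem_del_repl_iota // ifN_eqC ?neq_bump //; lia.
rewrite !del_repl_nths eq_size.
case: (eqVneq j i) => [->{j lt_j}|neq_ji].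
  move: eq_del; rewrite (del_nths v w) (del_nths v' w') eq_size.
  apply: WL_nths_sub; first exact: del_repl_iota_uniq.
  by move=> x; rewrite mem_del_repl_iota // eqxx mem_del_iota //; lia.
have lt_uj : unbump i j < (size v).-1 by rewrite /unbump; lia.
move: (eq_rd _ lt_uj); rewrite !repl_del_nths eq_size.
apply: WL_nths_sub; first exact: del_repl_iota_uniq.
move=> x; rewrite mem_del_repl_iota // mem_repl_del_iota // (negbTE neq_ji).
by rewrite unbumpK ?inE //; lia.
Qed.

Lemma OWL_eq_WL_del t (v : seq G) (v' : seq G') : size v' = size v ->
  OWL t v = OWL t v' <->
  atp v = atp v' /\ forall i, i < size v -> WL t (del v i) = WL t (del v' i).
Proof.
elim: t v v' => [|t IH] v v' eq_size.
  split=> /= [[eq_atp] | [-> _]] //; split=> // i _.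
  by congr GenTree.Leaf; apply: atp_del.
have eq_msets i : i < size v -> WL t (del v i) = WL t (del v' i) ->
    mset [seq OWL t (repl v i w) | w <- enum G] = mset [seq OWL t (repl v' i w) | w <- enum G']
    <-> mset [seq WL_entry t (del v i) w | w <- enum G] =
        mset [seq WL_entry t (del v' i) w | w <- enum G'].
  move=> lt_i eq_del.
  have eq_entry w w' : OWL t (repl v i w) = OWL t (repl v' i w') <->
                       WL_entry t (del v i) w = WL_entry t (del v' i) w'.
    rewrite IH; last by rewrite !size_repl ?eq_size.
    by rewrite size_repl //; apply: WL_del_repl_eq.
  by split; apply: mset_map_transfer => w w' _ _ /eq_entry.
rewrite OWL_succ_eq // IH //.
split=> [[[eq_atp eq_del] eq_m] | [eq_atp eq_succ]].
  split=> // i lt_i; apply/WL_succ_eq; split; first exact: eq_del.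
  exact/(eq_msets i lt_i (eq_del i lt_i))/eq_m.
have eq_step i (lt_i : i < size v) := proj1 (WL_succ_eq _ _ _) (eq_succ i lt_i).
split; first by split=> // i lt_i; case: (eq_step i lt_i).
by move=> i lt_i; case: (eq_step i lt_i) => eq_del /(eq_msets i lt_i eq_del).
Qed.

End ObliviousWL.

Theorem lemmaA1 (l k : nat) (hk : 1 <= k) (G G' : graph l)
    (v : (k.+1).-tuple G) (v' : (k.+1).-tuple G') (t : nat) :
  @OWL l G t v = @OWL l G' t v' <->
  (@atp l G v = @atp l G' v' /\
   forall i : 'I_k.+1, @WL l G t (@del l G v i) = @WL l G' t (@del l G' v' i)).
Proof.
rewrite OWL_eq_WL_del ?size_tuple //.
split=> -[eq_atp eq_del]; split=> // i; first exact: eq_del.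
by move=> lt_i; apply: (eq_del (Ordinal lt_i)).
Qed.
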